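(* Let $p$ be an odd prime and $k\in\{1,2,\ldots,\frac{p-1}2\}$. Then $$\frac{(-1)^k\binom{(p-1)/2+k}{k}}{\binom{(p-1)/2}{k}}\equiv1+2p\sum_{i=1}^k\frac1{2i-1}\equiv3-2(-4)^k\frac{\binom{(p-1)/2}{k}}{\binom{2k}k}\pmod{p^2}.$$
   Context: Congruences are between rational numbers whose denominators are prime to $p$. *)

From mathcomp Require Import all_boot all_order all_algebra.
Set Implicit Arguments. Unset Strict Implicit. Unset Printing Implicit Defensive.
Import Order.TTheory GRing.Theory Num.Theory.
Local Open Scope ring_scope.

Definition p_integral (p : nat) (x : rat) : Prop :=
  coprime p `|denq x|%N.

Definition rat_cong_mod (p : nat) (m : rat) (x y : rat) : Prop :=
  p_integral p ((x - y) / m).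

From mathcomp Require Import all_boot all_order all_algebra.
From mathcomp Require Import ring lra zify.
Import Order.TTheory GRing.Theory Num.Theory.
Local Open Scope ring_scope.

(** Put h = (p-1)/2, a = 2k+1, S_k = sum_(i<=k) 1/(2i-1) and
    D_k = (-4)^k C(h,k)/C(2k,k).  As k increases by one, the left-hand quotient
    A_k is multiplied by (p+a)/(a-p) = 1 + 2p/a + O(p^2) and D_k by 1 - p/a,
    so induction from k = 0 gives A_k = 1 + 2p S_k and D_k = 1 - p S_k modulo
    p^2; then 3 - 2 D_k = 1 + 2p S_k too.  Every denominator involved is a
    positive integer below p, hence prime to p. *)

(* An unreduced fraction with denominator prime to p: unlike [p_integral] it
   is visibly closed under the ring operations. *)
Definition p_quotient (p : nat) (x : rat) : Prop :=
  exists (n d : int), coprime p `|d|%N /\ x = n%:~R / d%:~R.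

Definition eq_mod_p2 (p : nat) (x y : rat) : Prop :=
  exists2 e, p_quotient p e & x = y + p%:R ^+ 2 * e.

Section PQuotient.
Variable p : nat.
Hypothesis p_gt1 : (1 < p)%N.

Lemma coprime_neq0 (d : int) : coprime p `|d|%N -> d != 0.
Proof. by apply: contraTneq => ->; rewrite /coprime gcdn0; case: p p_gt1 => [|[]]. Qed.

Lemma p_integral_quotient x : p_quotient p x -> p_integral p x.
Proof.
case=> n [d] [cd ->]; rewrite /p_integral.
move: cd; case: divqP => [d0|k y k0] cd; first by move: (@coprime_neq0 0 cd).
by move: cd; rewrite abszM => /coprime_dvdr; apply; apply: dvdn_mull.
Qed.

Lemma p_quotient_int (n : int) : p_quotient p n%:~R.
Proof. by exists n, 1; rewrite /coprime gcdn1 divr1. Qed.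

Lemma p_quotient_nat (n : nat) : p_quotient p n%:R.
Proof. by rewrite pmulrn; apply: p_quotient_int. Qed.

Lemma p_quotientV (d : int) : coprime p `|d|%N -> p_quotient p (d%:~R)^-1.
Proof. by move=> cd; exists 1, d; rewrite div1r. Qed.

Lemma p_quotientD x y : p_quotient p x -> p_quotient p y -> p_quotient p (x + y).
Proof.
case=> n1 [d1] [c1 ->]; case=> n2 [d2] [c2 ->].
exists (n1 * d2 + n2 * d1), (d1 * d2); split; first by rewrite abszM coprimeMr c1 c2.
have d1n0 : (d1%:~R : rat) != 0 by rewrite intr_eq0 coprime_neq0.
have d2n0 : (d2%:~R : rat) != 0 by rewrite intr_eq0 coprime_neq0.
by rewrite rmorphD !rmorphM /=; field; rewrite d1n0 d2n0.
Qed.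

Lemma p_quotientM x y : p_quotient p x -> p_quotient p y -> p_quotient p (x * y).
Proof.
case=> n1 [d1] [c1 ->]; case=> n2 [d2] [c2 ->].
exists (n1 * n2), (d1 * d2); split; first by rewrite abszM coprimeMr c1 c2.
have d1n0 : (d1%:~R : rat) != 0 by rewrite intr_eq0 coprime_neq0.
have d2n0 : (d2%:~R : rat) != 0 by rewrite intr_eq0 coprime_neq0.
by rewrite !rmorphM /=; field; rewrite d1n0 d2n0.
Qed.

Lemma p_quotientN x : p_quotient p x -> p_quotient p (- x).
Proof. by rewrite -mulN1r; apply: p_quotientM; apply: (p_quotient_int (-1)). Qed.

Lemma p_quotientB x y : p_quotient p x -> p_quotient p y -> p_quotient p (x - y).
Proof. by move=> qx qy; apply: p_quotientD => //; apply: p_quotientN. Qed.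

End PQuotient.

Lemma p_quotient_invn (p m : nat) : prime p -> (0 < m < p)%N -> p_quotient p m%:R^-1.
Proof.
move=> p_pr /andP[m_gt0 m_lt_p]; rewrite pmulrn; apply: p_quotientV.
rewrite absz_nat prime_coprime //; apply/negP => /(dvdn_leq m_gt0).
by rewrite leqNgt m_lt_p.
Qed.

Lemma mul_bin_central k :
  (k.+1 * 'C(2 * k.+1, k.+1) = 2 * (2 * k).+1 * 'C(2 * k, k))%N.
Proof.
have e1 := mul_bin_diag (2 * k.+1) k.
have e2 := mul_bin_diag (2 * k).+1 k.
have e3 := mul_bin_left (2 * k).+1 k.
rewrite (_ : (2 * k.+1).-1 = (2 * k).+1)%N in e1; last by lia.
rewrite (_ : ((2 * k).+1 - k = k.+1)%N) in e3; last by lia.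
apply/eqP; rewrite -(eqn_pmul2l (ltn0Sn k)); apply/eqP.
by rewrite -e1 mulnCA -e3 -e2; ring.
Qed.

Definition odd_harmonic k : rat := \sum_(1 <= i < k.+1) ((2 * i).-1)%:R^-1.

Definition alt_bin_ratio h k : rat := (-1) ^+ k * 'C(h + k, k)%:R / 'C(h, k)%:R.

Definition central_bin_ratio h k : rat := (-4) ^+ k * 'C(h, k)%:R / 'C(2 * k, k)%:R.

Lemma odd_harmonic0 : odd_harmonic 0 = 0.
Proof. by rewrite /odd_harmonic big_geq. Qed.

Lemma odd_harmonicS k : odd_harmonic k.+1 = odd_harmonic k + (2 * k).+1%:R^-1.
Proof.
by rewrite /odd_harmonic big_nat_recr //; congr (_ + _%:R^-1); lia.
Qed.

Lemma alt_bin_ratio0 h : alt_bin_ratio h 0 = 1.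
Proof. by rewrite /alt_bin_ratio !bin0 mul1r invr1. Qed.

Lemma central_bin_ratio0 h : central_bin_ratio h 0 = 1.
Proof. by rewrite /central_bin_ratio !bin0 mul1r invr1. Qed.

Lemma alt_bin_ratioS h k : (k < h)%N ->
  alt_bin_ratio h k.+1 = - alt_bin_ratio h k * (h + k.+1)%:R / (h - k)%:R.
Proof.
move=> lt_kh; rewrite /alt_bin_ratio exprS.
have up : k.+1%:R * 'C(h + k.+1, k.+1)%:R = (h + k.+1)%:R * 'C(h + k, k)%:R :> rat.
  by rewrite -!natrM -mul_bin_diag addnS.
have down : k.+1%:R * 'C(h, k.+1)%:R = (h - k)%:R * 'C(h, k)%:R :> rat.
  by rewrite -!natrM mul_bin_left.
have k1n0 : k.+1%:R != 0 :> rat by rewrite pnatr_eq0.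
have Chk_n0 : 'C(h, k)%:R != 0 :> rat by rewrite pnatr_eq0 -lt0n bin_gt0 ltnW.
have hk_n0 : (h - k)%:R != 0 :> rat by rewrite pnatr_eq0 subn_eq0 -ltnNge.
rewrite (canRL (mulKf k1n0) up) (canRL (mulKf k1n0) down).
by field; rewrite hk_n0 Chk_n0 addrC natr1.
Qed.

Lemma central_bin_ratioS h k :
  central_bin_ratio h k.+1 = - central_bin_ratio h k * (2 * (h - k))%:R / (2 * k).+1%:R.
Proof.
rewrite /central_bin_ratio exprS.
have up : k.+1%:R * 'C(2 * k.+1, k.+1)%:R = 2 * (2 * k).+1%:R * 'C(2 * k, k)%:R :> rat.
  by rewrite -!natrM mul_bin_central.
have down : k.+1%:R * 'C(h, k.+1)%:R = (h - k)%:R * 'C(h, k)%:R :> rat.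
  by rewrite -!natrM mul_bin_left.
have k1n0 : k.+1%:R != 0 :> rat by rewrite pnatr_eq0.
have C2k_n0 : 'C(2 * k, k)%:R != 0 :> rat by rewrite pnatr_eq0 -lt0n bin_gt0; lia.
have k_ge0 : 0 <= k%:R :> rat by rewrite ler0n.
rewrite (canRL (mulKf k1n0) up) (canRL (mulKf k1n0) down) natrM.
by field; rewrite C2k_n0 !lt0r_neq0 //; lra.
Qed.

Section Congruences.
Variables p h : nat.
Hypotheses (p_prime : prime p) (p_eq : p = (2 * h).+1).

Let p_gt1 : (1 < p)%N := prime_gt1 p_prime.

Lemma odd_inv_p_quotient k : (k < h)%N -> p_quotient p (2 * k).+1%:R^-1.
Proof. by move=> lt_kh; apply: p_quotient_invn => //; lia. Qed.

Lemma odd_harmonic_p_quotient k : (k <= h)%N -> p_quotient p (odd_harmonic k).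
Proof.
elim: k => [|k IH] le_kh; first by rewrite odd_harmonic0; apply: (p_quotient_nat p 0).
rewrite odd_harmonicS; apply: p_quotientD => //; first exact: IH (ltnW le_kh).
exact: odd_inv_p_quotient.
Qed.

Lemma alt_bin_ratio_congr k : (k <= h)%N ->
  eq_mod_p2 p (alt_bin_ratio h k) (1 + 2 * p%:R * odd_harmonic k).
Proof.
elim: k => [|k IH] lt_kh.
  exists 0; first exact: (p_quotient_nat p 0).
  by rewrite alt_bin_ratio0 odd_harmonic0 !(mulr0, addr0).
rewrite alt_bin_ratioS //; have [e qe ->] := IH (ltnW lt_kh).
have qS := odd_harmonic_p_quotient _ (ltnW lt_kh).
have qa := odd_inv_p_quotient _ lt_kh.
have qPa : p_quotient p (p - (2 * k).+1)%:R^-1 by apply: p_quotient_invn => //; lia.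
set S := odd_harmonic k; set P : rat := p%:R; set a : rat := (2 * k).+1%:R.
exists (- ((4 * S + e * (a + P) + 2 * a^-1) * (p - (2 * k).+1)%:R^-1)).
  apply/p_quotientN/p_quotientM => //.
  apply: p_quotientD => //; last by apply: p_quotientM => //; apply: p_quotient_nat.
  apply: p_quotientD => //; first by apply: p_quotientM => //; apply: p_quotient_nat.
  by apply: p_quotientM => //; apply: p_quotientD => //; apply: p_quotient_nat.
have eP : P = 2 * h%:R + 1 by rewrite /P p_eq -addn1 natrD natrM.
have ea : a = 2 * k%:R + 1 by rewrite /a -addn1 natrD natrM.
have k_ge0 : 0 <= k%:R :> rat by rewrite ler0n.
have lt_kh' : k%:R + 1 <= h%:R :> rat by rewrite natr1 ler_nat.
have ePa : (p - (2 * k).+1)%:R = P - a by rewrite natrB //; lia.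
rewrite odd_harmonicS -/S -/a -/P ePa natrB ?(ltnW lt_kh) // natrD -natr1 eP ea.
by field; rewrite !lt0r_neq0 //; lra.
Qed.

Lemma central_bin_ratio_congr k : (k <= h)%N ->
  eq_mod_p2 p (central_bin_ratio h k) (1 - p%:R * odd_harmonic k).
Proof.
elim: k => [|k IH] lt_kh.
  exists 0; first exact: (p_quotient_nat p 0).
  by rewrite central_bin_ratio0 odd_harmonic0 !(mulr0, subr0, addr0).
rewrite central_bin_ratioS; have [f qf ->] := IH (ltnW lt_kh).
have qS := odd_harmonic_p_quotient _ (ltnW lt_kh).
have qa := odd_inv_p_quotient _ lt_kh.
set S := odd_harmonic k; set P : rat := p%:R; set a : rat := (2 * k).+1%:R.
exists (S * a^-1 + f * (1 - P * a^-1)).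
  apply: p_quotientD => //; first exact: p_quotientM.
  apply: p_quotientM => //; apply: p_quotientB => //; first exact: (p_quotient_nat p 1).
  by apply: p_quotientM => //; apply: p_quotient_nat.
have eP : P = 2 * h%:R + 1 by rewrite /P p_eq -addn1 natrD natrM.
have ea : a = 2 * k%:R + 1 by rewrite /a -addn1 natrD natrM.
have k_ge0 : 0 <= k%:R :> rat by rewrite ler0n.
rewrite odd_harmonicS -/S -/a -/P natrM natrB ?(ltnW lt_kh) // eP ea.
by field; rewrite lt0r_neq0 //; lra.
Qed.

End Congruences.

Theorem lemma2p5 (p k : nat) :
  prime p -> odd p -> (1 <= k)%N -> (k <= p.-1./2)%N ->
  let h := p.-1./2 in
  let A : rat := (-1) ^+ k * ('C(h + k, k))%:R / ('C(h, k))%:R in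
  let B : rat := 1 + 2 * p%:R * \sum_(1 <= i < k.+1) ((2 * i).-1)%:R^-1 in
  let C : rat := 3 - 2 * (-4) ^+ k * ('C(h, k))%:R / ('C(2 * k, k))%:R in
  rat_cong_mod p (p%:R ^+ 2) A B /\ rat_cong_mod p (p%:R ^+ 2) B C.
Proof.
move=> p_prime p_odd _ le_kh h A B C.
have p_eq : p = (2 * h).+1 by rewrite /h; lia.
have p_gt1 := prime_gt1 p_prime.
have pn0 : p%:R != 0 :> rat by rewrite pnatr_eq0 -lt0n ltnW.
have [e qe eA] := alt_bin_ratio_congr p h p_prime p_eq k le_kh.
have [f qf eD] := central_bin_ratio_congr p h p_prime p_eq k le_kh.
have eC : C = 3 - 2 * central_bin_ratio h k by rewrite /C /central_bin_ratio !mulrA.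
split; apply: p_integral_quotient => //.
  by rewrite [A]eA /B -/(odd_harmonic k) (_ : (_ - _) / _ = e) //; field.
rewrite [C]eC eD /B -/(odd_harmonic k) (_ : (_ - _) / _ = 2 * f); last by field.
by apply: p_quotientM => //; apply: p_quotient_nat.
Qed.
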